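(* Let $k\ge1$ and $n$ be integers, and suppose that neither $0$ nor $k-1$ lies in the tail of $G(n,k)$. Then $G(n,k)$ has a cycle $C'$ containing both $k-1$ and $(n-3)_{k+1}$, and a cycle $C''$ containing both $0$ and $(n-1)_{k+1}$. Moreover, $C'$ is longer (has more edges) than the tail.
   Context: For an integer $\ell$, $\ell_k$ and $\ell_{k+1}$ denote the least nonnegative residues of $\ell$ modulo $k$ and $k+1$. $G(n,k)$ is the directed graph on vertices $0,1,\dots,k$ whose edges are exactly the $k$ edges $(i+n-2)_{k+1}\to(i+n-1)_k$, $1\le i\le k$; a loop $a\to a$ counts as a cycle of length $1$. Vertex $k$ has in-degree $0$, vertex $(n-2)_{k+1}$ has out-degree $0$, and all other vertices have in- and out-degree $1$, so $G(n,k)$ is a disjoint union of directed cycles and one directed path, the tail, from $k$ to $(n-2)_{k+1}$ (of length $0$ if $k=(n-2)_{k+1}$). Lengths are numbers of edges. *)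

From mathcomp Require Import all_boot all_order all_algebra.
Set Implicit Arguments. Unset Strict Implicit. Unset Printing Implicit Defensive.
Import Order.TTheory GRing.Theory Num.Theory.

Definition res (l : int) (m : nat) : nat := absz (l %% (m%:Z))%Z.

(* Edge relation of G(n,k): a -> b iff for some 1 <= i <= k,
   a = (i+n-2)_{k+1} and b = (i+n-1)_k.  Vertices are the nats 0..k. *)
Definition Gedge (n : int) (k : nat) : rel nat :=
  fun a b => [exists i : 'I_k,
     (a == res ((i.+1)%:Z + n - 2)%R k.+1) && (b == res ((i.+1)%:Z + n - 1)%R k)].

(* A directed cycle of G(n,k): a nonempty sequence of distinct vertices
   c_0 -> c_1 -> ... -> c_{m-1} -> c_0 (a loop [:: a] means a -> a).
   Its length (number of edges) is size c. *)
Definition is_Gcycle (n : int) (k : nat) (c : seq nat) : bool :=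
  [&& c != [::], cycle (Gedge n k) c & uniq c].

(* The tail of G(n,k): the directed path k :: s from k to (n-2)_{k+1}
   (with distinct vertices).  Its length (number of edges) is size s. *)
Definition is_Gtail (n : int) (k : nat) (s : seq nat) : bool :=
  [&& path (Gedge n k) k s, last k s == res (n - 2)%R k.+1 & uniq (k :: s)].

(* Send the sink (n-2)_{k+1} of G(n,k) back to k.  Every vertex then has one
   successor and one predecessor, so G(n,k) becomes the functional graph of a
   permutation P of {0,...,k} whose cycle through k is the tail closed up; a
   P-orbit that avoids the tail avoids the sink and is a cycle of G(n,k).
   The rotation r a = (a+1)_{k+1} almost commutes with P: when neither a nor
   r a is the sink, P (r a) = (P a + 1)_k, which is r (P a) unless P a = k-1.
   As r (k-1) = k, r k = 0 and neither 0 nor k-1 lies on the tail, the orbits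
   of k-1 and of 0 run alongside the tail, one step below and one step above
   it.  When the tail reaches the sink (n-2)_{k+1} they reach (n-3)_{k+1} and
   (n-1)_{k+1}; and if the orbit of k-1 closed up within size s steps, the tail
   would return to k too early. *)

From mathcomp Require Import all_boot all_order all_algebra zify.
Import Order.TTheory GRing.Theory Num.Theory.
Set Implicit Arguments. Unset Strict Implicit. Unset Printing Implicit Defensive.

Section Residues.
Variable m : nat.
Hypothesis m_gt0 : 0 < m.

Lemma resE (l : int) : Posz (res l m) = (l %% m)%Z.
Proof. by rewrite /res gez0_abs // modz_ge0 // eqz_nat -lt0n. Qed.

Lemma res_lt (l : int) : res l m < m.
Proof. by rewrite -ltz_nat resE ltz_pmod. Qed.

Lemma res_small (a : nat) : a < m -> res a m = a.
Proof. by move=> lt_am; apply/eqP; rewrite -eqz_nat resE modz_small // lt_am andbT. Qed.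

Lemma modn_res (a : nat) : a %% m = res a m.
Proof. by apply/eqP; rewrite -eqz_nat resE modz_nat. Qed.

Lemma resDml (l l' : int) : res (Posz (res l m) + l')%R m = res (l + l')%R m.
Proof. by apply/eqP; rewrite -eqz_nat !resE modzDml. Qed.

Lemma resDr (l : int) : res (l + Posz m)%R m = res l m.
Proof. by apply/eqP; rewrite -eqz_nat !resE modzDr. Qed.

Lemma resS (l : int) : res (l + 1)%R m = (res l m).+1 %% m.
Proof. by rewrite modn_res -[(res l m).+1]addn1 PoszD resDml. Qed.

Lemma res_addIr (a b : nat) (l : int) :
  a < m -> b < m -> res (Posz a + l)%R m = res (Posz b + l)%R m -> a = b.
Proof.
move=> lt_am lt_bm /eqP; rewrite -eqz_nat !resE eqz_modDr => /eqP.
by rewrite !modz_small ?lt_am ?lt_bm // => -[].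
Qed.

End Residues.

Lemma fcycle_traject (T : eqType) (f : T -> T) (x : T) (m : nat) :
  iter m f x = x -> fcycle f (traject f x m).
Proof.
case: m => // m loop_m.
by rewrite trajectS /= -[X in rcons _ X]loop_m iterSr -trajectSr fpath_traject.
Qed.

Lemma ordS_max (k : nat) : ordS (@ord_max k) = ord0.
Proof. by apply: val_inj; rewrite /= modnn. Qed.

Lemma val_ord_pred_max (k : nat) : val (ord_pred (@ord_max k)) = k.-1.
Proof. by case: k => //= k; rewrite modnDr modn_small. Qed.

Section PermutationClosure.
Variables (n : int) (k : nat).

(* The edge labelled [i.+1] leaves [res (i + n - 1) k.+1]; [edge_index a] is
   this [i] for a vertex [a], and equals [k] exactly at the sink. *)
Definition edge_index (a : nat) : nat := res (Posz a + (1 - n))%R k.+1.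

Definition Gsucc (a : nat) : nat :=
  if edge_index a < k then res (Posz (edge_index a) + n)%R k else k.

Lemma Gsucc_le (a : nat) : Gsucc a <= k.
Proof.
rewrite /Gsucc; case: ifP => // lt_ik.
by rewrite ltnW // res_lt // (leq_ltn_trans _ lt_ik).
Qed.

Definition Gperm (a : 'I_k.+1) : 'I_k.+1 := Ordinal (Gsucc_le a : Gsucc a < k.+1).

Definition ores (l : int) : 'I_k.+1 := Ordinal (res_lt (ltn0Sn k) l).

Definition sink : 'I_k.+1 := ores (n - 2).

Lemma ordS_ores (l : int) : ordS (ores l) = ores (l + 1)%R.
Proof. by apply: val_inj; rewrite /= resS. Qed.

Lemma edge_indexK (i : nat) :
  i < k.+1 -> edge_index (res (Posz i + (n - 1))%R k.+1) = i.
Proof.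
move=> lt_ik; rewrite /edge_index resDml // -[RHS](res_small (ltn0Sn k) lt_ik).
by congr res; lia.
Qed.

Lemma edge_indexKV (a : nat) :
  a < k.+1 -> res (Posz (edge_index a) + (n - 1))%R k.+1 = a.
Proof.
move=> lt_ak; rewrite /edge_index resDml // -[RHS](res_small (ltn0Sn k) lt_ak).
by congr res; lia.
Qed.

Lemma edge_index_sink : edge_index sink = k.
Proof.
rewrite /edge_index resDml // -(resDr (ltn0Sn k)).
by rewrite -[RHS](res_small (ltn0Sn k) (ltnSn k)); congr res; lia.
Qed.

Lemma edge_index_lt (a : 'I_k.+1) : (edge_index a < k) = (a != sink).
Proof.
apply/idP/idP => [lt_ik | ne_as].
  by apply: contraTneq lt_ik => ->; rewrite edge_index_sink ltnn.
have le_ik : edge_index a <= k by rewrite -ltnS res_lt.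
rewrite ltn_neqAle le_ik andbT; apply: contra ne_as => /eqP eq_ik.
apply/eqP; apply: ord_inj.
rewrite -(edge_indexKV (ltn_ord a)) -(edge_indexKV (ltn_ord sink)).
by rewrite edge_index_sink eq_ik.
Qed.

Lemma GedgeE (a b : nat) :
  Gedge n k a b = [&& a < k.+1, edge_index a < k & b == Gsucc a].
Proof.
apply/existsP/and3P => [[i /andP[/eqP-> /eqP->]] | [lt_ak lt_ik /eqP->]].
  have ->: res (Posz i.+1 + n - 2)%R k.+1 = res (Posz i + (n - 1))%R k.+1.
    by congr res; lia.
  have lt_iSk : i < k.+1 by rewrite ltnS ltnW.
  rewrite res_lt // /Gsucc edge_indexK // ltn_ord; split=> //=.
  by apply/eqP; congr res; lia.
exists (Ordinal lt_ik); rewrite -[a in a == _](edge_indexKV lt_ak) /Gsucc lt_ik.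
by apply/andP; split; apply/eqP => /=; congr res; lia.
Qed.

Lemma Gedge_Gperm (a : 'I_k.+1) : a != sink -> Gedge n k a (Gperm a).
Proof. by move=> ne_as; rewrite GedgeE ltn_ord edge_index_lt ne_as /=. Qed.

Lemma Gperm_sink : Gperm sink = ord_max.
Proof. by apply: val_inj; rewrite /= /Gsucc edge_index_sink ltnn. Qed.

Lemma Gperm_lt (a : 'I_k.+1) : a != sink -> Gperm a < k.
Proof.
rewrite -edge_index_lt => lt_ik; rewrite /= /Gsucc lt_ik res_lt //.
exact: leq_ltn_trans lt_ik.
Qed.

Lemma Gperm_inj : injective Gperm.
Proof.
move=> a b eq_ab.
have [eq_as|ne_as] := eqVneq a sink; have [eq_bs|ne_bs] := eqVneq b sink.
- by rewrite eq_as eq_bs.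
- by move: (Gperm_lt ne_bs); rewrite -eq_ab eq_as Gperm_sink ltnn.
- by move: (Gperm_lt ne_as); rewrite eq_ab eq_bs Gperm_sink ltnn.
move: eq_ab (ne_as) (ne_bs) => /(congr1 val) /=.
rewrite /Gsucc -!edge_index_lt => + lt_ak lt_bk; rewrite lt_ak lt_bk => eq_ab.
apply: ord_inj; rewrite -(edge_indexKV (ltn_ord a)) -(edge_indexKV (ltn_ord b)).
by rewrite (res_addIr _ lt_ak lt_bk eq_ab) // (leq_ltn_trans _ lt_ak).
Qed.

Lemma edge_index_ordS (b : 'I_k.+1) :
  edge_index (ordS b) = (edge_index b).+1 %% k.+1.
Proof. by rewrite /edge_index /= modn_res // resDml // -resS //; congr res; lia. Qed.

Lemma Gperm_ordS (b : 'I_k.+1) : b != sink -> ordS b != sink ->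
  val (Gperm (ordS b)) = (Gperm b).+1 %% k.
Proof.
rewrite -!edge_index_lt => lt_bk; rewrite edge_index_ordS modn_small ?ltnS // => lt_Sbk.
have k_gt0 : 0 < k := leq_ltn_trans (leq0n _) lt_bk.
rewrite /= /Gsucc edge_index_ordS modn_small ?ltnS // lt_bk lt_Sbk -resS //.
by congr res; lia.
Qed.

(* Each disjunct rules out the wrap-around [Gperm b = k.-1], [Gperm (ordS b) = 0]. *)
Lemma Gperm_ordS_commute (b : 'I_k.+1) : b != sink -> ordS b != sink ->
  (val (Gperm b) != k.-1) || (val (Gperm (ordS b)) != 0) ->
  Gperm (ordS b) = ordS (Gperm b).
Proof.
move=> ne_bs ne_Sbs; rewrite Gperm_ordS // => no_wrap.
apply: val_inj; rewrite Gperm_ordS //.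
move: no_wrap (Gperm_lt ne_bs); case: (Gperm b) => c /= _.
have [lt_Sck _ _|le_kSc no_wrap lt_ck] := ltnP c.+1 k.
  by rewrite !modn_small // ltnW.
have eq_Sck : c.+1 = k by lia.
by move: no_wrap; rewrite eq_Sck modnn -eq_Sck /= eqxx.
Qed.

Lemma iter_Gperm_ordS (x : 'I_k.+1) (L : nat) :
  (forall i, i < L -> [&& iter i Gperm x != sink, iter i Gperm (ordS x) != sink &
     (val (iter i.+1 Gperm x) != k.-1) || (val (iter i.+1 Gperm (ordS x)) != 0)]) ->
  iter L Gperm (ordS x) = ordS (iter L Gperm x).
Proof.
elim: L => // L IH no_wrap.
have {}IH : iter L Gperm (ordS x) = ordS (iter L Gperm x).
  by apply: IH => i lt_iL; apply: no_wrap; apply: ltnW.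
have /and3P[ne_xs ne_ys] := no_wrap L (ltnSn L).
by rewrite !iterS IH in ne_ys * => wrap; apply: Gperm_ordS_commute.
Qed.

Lemma Gpath_traject (x : 'I_k.+1) (p : seq nat) :
  path (Gedge n k) x p -> p = map val (traject Gperm (Gperm x) (size p)).
Proof.
elim: p x => //= a p IH x /andP[]; rewrite GedgeE => /and3P[_ _ /eqP->].
by move=> /(IH (Gperm x)) {1}->.
Qed.

Lemma Gcycle_orbit (x : 'I_k.+1) :
  sink \notin orbit Gperm x -> is_Gcycle n k (map val (orbit Gperm x)).
Proof.
move=> no_sink; apply/and3P; split.
- by rewrite -size_eq0 size_map size_orbit -lt0n order_gt0.
- rewrite cycle_map; apply: (@sub_in_cycle _ (predC1 sink)) (cycle_orbit Gperm_inj x).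
    by move=> a b ne_as _ /eqP <-; apply: Gedge_Gperm.
  by apply/allP => a a_in; apply: contraNneq no_sink => <-.
- by rewrite map_inj_uniq ?orbit_uniq //; apply: val_inj.
Qed.

End PermutationClosure.

Section Tail.
Variables (n : int) (k : nat) (s : seq nat).
Hypothesis tail_s : is_Gtail n k s.
Local Notation P := (@Gperm n k).
Local Notation sink := (sink n k).

Lemma tail_traject : k :: s = map val (traject P ord_max (size s).+1).
Proof.
by case/and3P: tail_s => /(@Gpath_traject n k ord_max) s_eq _ _; rewrite {1}s_eq.
Qed.

Lemma iter_tail_sink : iter (size s) P ord_max = sink.
Proof.
case/and3P: tail_s => _ /eqP last_s _; apply: val_inj; rewrite [RHS]/= -last_s.
rewrite (_ : last k s = last k (k :: s)) // tail_traject.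
by rewrite (last_map val _ (@ord_max k)) /= last_traject.
Qed.

Lemma fcycle_tail : fcycle P (traject P ord_max (size s).+1).
Proof. by apply: fcycle_traject; rewrite iterS iter_tail_sink Gperm_sink. Qed.

Lemma fconnect_tail (y : 'I_k.+1) : fconnect P ord_max y = (val y \in k :: s).
Proof.
rewrite tail_traject mem_map; last exact: val_inj.
by apply: (fconnect_cycle fcycle_tail); rewrite inE eqxx.
Qed.

Lemma iter_tail_inj (i j : nat) : i <= size s -> j <= size s ->
  iter i P ord_max = iter j P ord_max -> i = j.
Proof.
have order_tail : order P ord_max = (size s).+1.
  rewrite (order_cycle fcycle_tail) ?size_traject ?inE ?eqxx //.
  by rewrite -(map_inj_uniq val_inj) -tail_traject; case/and3P: tail_s.
rewrite -ltnS -[j <= _]ltnS -order_tail => lt_i lt_j eq_ij.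
by rewrite -(findex_iter lt_i) -(findex_iter lt_j) eq_ij.
Qed.

Lemma iter_tail_neq_sink (i : nat) : i < size s -> iter i P ord_max != sink.
Proof.
move=> lt_iL; apply/eqP; rewrite -iter_tail_sink.
by move=> /(iter_tail_inj (ltnW lt_iL) (leqnn _)) /eqP; rewrite ltn_eqF.
Qed.

Lemma mem_tail_iter (i : nat) : val (iter i P ord_max) \in k :: s.
Proof. by rewrite -fconnect_tail fconnect_iter. Qed.

Lemma sink_notin_orbit (x : 'I_k.+1) : val x \notin k :: s -> sink \notin orbit P x.
Proof.
move=> x_off; rewrite -fconnect_orbit; apply: contra x_off => x_sink.
have tail_sink : fconnect P ord_max sink.
  by rewrite fconnect_tail -iter_tail_sink mem_tail_iter.
by rewrite -fconnect_tail (connect_trans tail_sink) // (fconnect_sym (@Gperm_inj n k)).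
Qed.

Hypotheses (zero_notin_tail : 0 \notin k :: s) (pred_notin_tail : k.-1 \notin k :: s).
Local Notation kpred := (ord_pred (@ord_max k)).

Lemma sink_notin_orbit_pred : sink \notin orbit P kpred.
Proof. by apply: sink_notin_orbit; rewrite val_ord_pred_max. Qed.

Lemma sink_notin_orbit_zero : sink \notin orbit P ord0.
Proof. exact: sink_notin_orbit. Qed.

Lemma iter_tail_pred (i : nat) : i <= size s -> iter i P ord_max = ordS (iter i P kpred).
Proof.
move=> le_iL; rewrite -{1}[ord_max]ord_predK; apply: iter_Gperm_ordS => j lt_ji.
have lt_jL : j < size s := leq_trans lt_ji le_iL.
rewrite ord_predK iter_tail_neq_sink // andTb; apply/andP; split.
  apply: contraNneq _ sink_notin_orbit_pred => <-.
  by rewrite -fconnect_orbit fconnect_iter.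
by apply/orP; right; apply: contraNneq _ zero_notin_tail => <-; apply: mem_tail_iter.
Qed.

Lemma iter_zero_tail (i : nat) : i <= size s -> iter i P ord0 = ordS (iter i P ord_max).
Proof.
move=> le_iL; rewrite -ordS_max; apply: iter_Gperm_ordS => j lt_ji.
have lt_jL : j < size s := leq_trans lt_ji le_iL.
rewrite ordS_max iter_tail_neq_sink // andTb; apply/andP; split.
  apply: contraNneq _ sink_notin_orbit_zero => <-.
  by rewrite -fconnect_orbit fconnect_iter.
by apply/orP; left; apply: contraNneq _ pred_notin_tail => <-; apply: mem_tail_iter.
Qed.

Lemma ores_n3_in_orbit_pred : ores k (n - 3) \in orbit P kpred.
Proof.
have: ordS (iter (size s) P kpred) = ordS (ores k (n - 3)).
  by rewrite -iter_tail_pred // iter_tail_sink ordS_ores; congr ores; lia.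
by move/ordS_inj <-; rewrite -fconnect_orbit fconnect_iter.
Qed.

Lemma ores_n1_in_orbit_zero : ores k (n - 1) \in orbit P ord0.
Proof.
have ->: ores k (n - 1) = iter (size s) P ord0.
  by rewrite iter_zero_tail // iter_tail_sink ordS_ores; congr ores; lia.
by rewrite -fconnect_orbit fconnect_iter.
Qed.

Lemma tail_lt_order_pred : size s < order P kpred.
Proof.
rewrite ltnNge; apply/negP => le_oL.
move: (iter_tail_pred le_oL); rewrite (iter_order (@Gperm_inj n k)) ord_predK.
by move=> /(iter_tail_inj le_oL (leq0n _)) o0; move: (order_gt0 P kpred); rewrite o0.
Qed.

End Tail.

Theorem lemma3p8 (k : nat) (n : int) (s : seq nat) :
  1 <= k ->
  is_Gtail n k s ->
  0 \notin k :: s ->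
  k.-1 \notin k :: s ->
  exists C' C'' : seq nat,
    [/\ is_Gcycle n k C', k.-1 \in C', res (n - 3)%R k.+1 \in C' & size s < size C'] /\
    [/\ is_Gcycle n k C'', 0 \in C'' & res (n - 1)%R k.+1 \in C''].
Proof.
(* [1 <= k] already follows from [0 \notin k :: s]. *)
move=> _ tail_s zero_notin_tail pred_notin_tail.
exists (map val (orbit (@Gperm n k) (ord_pred ord_max))).
exists (map val (orbit (@Gperm n k) ord0)).
split; split.
- exact/Gcycle_orbit/(sink_notin_orbit_pred tail_s).
- by rewrite -val_ord_pred_max map_f // in_orbit.
- exact: (map_f val (ores_n3_in_orbit_pred tail_s zero_notin_tail pred_notin_tail)).
- by rewrite size_map size_orbit tail_lt_order_pred.
- exact/Gcycle_orbit/(sink_notin_orbit_zero tail_s).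
- exact: (map_f val (in_orbit _ _)).
- exact: (map_f val (ores_n1_in_orbit_zero tail_s zero_notin_tail pred_notin_tail)).
Qed.
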